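(* For any $a>b>0$, the function $\rho\mapsto\eta(\rho,a,b)$ is convex on $[0,1]$ and symmetric about $\rho=1/2$ (i.e., $\eta(\rho,a,b)=\eta(1-\rho,a,b)$); in particular it is minimized at $\rho=1/2$, where $\eta(1/2,a,b)=\frac12(\sqrt a-\sqrt b)^2$.
   Context: With $\bar\rho=1-\rho$, $\tau=\frac{a-b}{\log a-\log b}$, $\gamma=\sqrt{(\bar\rho-\rho)^2\tau^2+4\rho\bar\rho ab}$, for $\rho\in(0,1)$ $$\eta(\rho,a,b)=\frac{a+b}{2}-\gamma+\frac{(\bar\rho-\rho)\tau}{2}\log\frac{\rho(\gamma+(\bar\rho-\rho)\tau)}{\bar\rho(\gamma-(\bar\rho-\rho)\tau)},$$ and $\eta(0,a,b)=\eta(1,a,b)=\frac{a+b}{2}-\tau\log\frac{e\sqrt{ab}}{\tau}$ (the limits as $\rho\to0$ and $\rho\to1$). *)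

From Stdlib Require Import Reals Lra.
Open Scope R_scope.

Definition tau_ab (a b : R) : R := (a - b) / (ln a - ln b).

Definition gamma_ab (rho a b : R) : R :=
  sqrt (((1 - rho) - rho)^2 * (tau_ab a b)^2 + 4 * rho * (1 - rho) * a * b).

(* eta(rho,a,b); for rho in (0,1) the main formula, at rho = 0 or 1 the limit value *)
Definition eta (rho a b : R) : R :=
  let rb := 1 - rho in
  let t := tau_ab a b in
  let g := gamma_ab rho a b in
  if Rlt_dec 0 rho then
    if Rlt_dec rho 1 then
      (a + b) / 2 - g
      + ((rb - rho) * t / 2)
        * ln ((rho * (g + (rb - rho) * t)) / (rb * (g - (rb - rho) * t)))
    else (a + b) / 2 - t * ln (exp 1 * sqrt (a * b) / t)
  else (a + b) / 2 - t * ln (exp 1 * sqrt (a * b) / t).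

(* For w > 0 the function psi_w(rho) = rho (b - w) + (1 - rho) (a - a b / w)
   - (1 - 2 rho) tau ln (w / b) is affine in rho, and eta(rho) is its maximum over w,
   attained at the stationary point of rho w + (1 - rho) a b / w - (1 - 2 rho) tau ln w
   (maximality follows from 1 + x <= exp x).  As a pointwise supremum of affine
   functions eta is convex; the substitution w -> a b / w exchanges rho and 1 - rho,
   whence the symmetry, and convexity plus symmetry put the minimum at 1/2. *)

From Stdlib Require Import Reals Lra Psatz.
Open Scope R_scope.

Lemma ln_div x y : 0 < x -> 0 < y -> ln (x / y) = ln x - ln y.
Proof.
  intros hx hy; unfold Rdiv.
  rewrite ln_mult, ln_Rinv; [lra | lra | lra | now apply Rinv_0_lt_compat].
Qed.

Lemma ln_sqrt x : 0 < x -> ln (sqrt x) = ln x / 2.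
Proof.
  intros hx.
  assert (hs : 0 < sqrt x) by now apply sqrt_lt_R0.
  assert (h : ln x = ln (sqrt x * sqrt x)) by (rewrite sqrt_sqrt; lra).
  rewrite ln_mult in h; lra.
Qed.

(* u is the stationary point of w |-> p w + q / w - c ln w for c = p u - q / u. *)
Lemma stationary_point_min p q u v : 0 <= p -> 0 <= q -> 0 < u -> 0 < v ->
  p * u + q / u - (p * u - q / u) * ln u <= p * v + q / v - (p * u - q / u) * ln v.
Proof.
  intros hp hq hu hv.
  set (x := ln v - ln u).
  assert (hv_exp : v = u * exp x).
  { unfold x; rewrite <- ln_div, exp_ln by (try apply Rdiv_lt_0_compat; lra).
    field; lra. }
  assert (hinv_exp : q / v = q / u * exp (- x)).
  { rewrite hv_exp, exp_Ropp; field; split; [apply Rgt_not_eq, exp_pos | lra]. }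
  assert (hqu : 0 <= q / u) by (apply Rmult_le_pos; [lra | apply Rlt_le, Rinv_0_lt_compat; lra]).
  assert (h1 := exp_ineq1_le x); assert (h2 := exp_ineq1_le (- x)).
  assert (0 <= p * u * (exp x - 1 - x)) by (apply Rmult_le_pos; nra).
  assert (0 <= q / u * (exp (- x) - 1 + x)) by (apply Rmult_le_pos; nra).
  replace (ln v) with (ln u + x) by (unfold x; ring).
  rewrite hinv_exp, hv_exp at 1.
  nra.
Qed.

Lemma tau_ab_pos a b : 0 < b -> b < a -> 0 < tau_ab a b.
Proof.
  intros hb hab; assert (ln b < ln a) by (apply ln_increasing; lra).
  apply Rdiv_lt_0_compat; lra.
Qed.

Lemma tau_ab_mul_ln a b : 0 < b -> b < a -> tau_ab a b * (ln a - ln b) = a - b.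
Proof.
  intros hb hab; assert (ln b < ln a) by (apply ln_increasing; lra).
  unfold tau_ab; field; lra.
Qed.

Definition eta_minorant (a b w rho : R) : R :=
  rho * (b - w) + (1 - rho) * (a - a * b / w)
  - (1 - 2 * rho) * tau_ab a b * (ln w - ln b).

Lemma eta_minorant_affine a b w l r1 r2 :
  eta_minorant a b w (l * r1 + (1 - l) * r2)
  = l * eta_minorant a b w r1 + (1 - l) * eta_minorant a b w r2.
Proof. unfold eta_minorant; ring. Qed.

Lemma eta_minorant_inv a b w rho : 0 < b -> b < a -> 0 < w ->
  eta_minorant a b w (1 - rho) = eta_minorant a b (a * b / w) rho.
Proof.
  intros hb hab hw.
  assert (ht := tau_ab_mul_ln a b hb hab).
  unfold eta_minorant; rewrite ln_div, ln_mult by nra.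
  replace (a * b / (a * b / w)) with w by (field; split; lra).
  nra.
Qed.

Lemma eta_minorant_le_stationary a b rho u w : 0 <= rho <= 1 -> 0 < a -> 0 < b ->
  0 < u -> 0 < w ->
  (1 - 2 * rho) * tau_ab a b = (1 - rho) * (a * b) / u - rho * u ->
  eta_minorant a b w rho <= eta_minorant a b u rho.
Proof.
  intros hr ha hb hu hw hcrit.
  assert (hq : 0 <= (1 - rho) * (a * b)) by (apply Rmult_le_pos; nra).
  assert (hmin := stationary_point_min rho ((1 - rho) * (a * b)) u w
                    ltac:(lra) hq hu hw).
  enough (hdiff : eta_minorant a b u rho - eta_minorant a b w rho
    = (rho * w + (1 - rho) * (a * b) / w
       - (rho * u - (1 - rho) * (a * b) / u) * ln w)
    - (rho * u + (1 - rho) * (a * b) / u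
       - (rho * u - (1 - rho) * (a * b) / u) * ln u)) by lra.
  unfold eta_minorant; rewrite hcrit; field; lra.
Qed.

Lemma eta_boundary a b : 0 < b -> b < a ->
  (a + b) / 2 - tau_ab a b * ln (exp 1 * sqrt (a * b) / tau_ab a b)
  = (a + b) / 2 - tau_ab a b * (1 + (ln a + ln b) / 2 - ln (tau_ab a b)).
Proof.
  intros hb hab; assert (ht := tau_ab_pos a b hb hab).
  assert (hs : 0 < sqrt (a * b)) by (apply sqrt_lt_R0; nra).
  assert (he := exp_pos 1).
  now rewrite ln_div, ln_mult, ln_exp, ln_sqrt, ln_mult by nra.
Qed.

Lemma eta_interior_stationary a b rho : 0 < b -> b < a -> 0 < rho < 1 ->
  exists u, 0 < u
  /\ (1 - 2 * rho) * tau_ab a b = (1 - rho) * (a * b) / u - rho * u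
  /\ eta rho a b = eta_minorant a b u rho.
Proof.
  intros hb hab hr.
  assert (hln := tau_ab_mul_ln a b hb hab).
  unfold eta; destruct (Rlt_dec 0 rho) as [_ | ]; [| lra].
  destruct (Rlt_dec rho 1) as [_ | ]; [| lra].
  assert (hpos : 0 < 4 * rho * (1 - rho) * a * b).
  { assert (0 < rho * (1 - rho)) by nra.
    assert (0 < a * b) by nra.
    nra. }
  set (t := tau_ab a b) in *; set (g := gamma_ab rho a b); set (s := 1 - rho - rho).
  assert (hg2 : g * g = s ^ 2 * t ^ 2 + 4 * rho * (1 - rho) * a * b).
  { unfold g, gamma_ab; apply sqrt_sqrt; fold t; nra. }
  assert (hg0 : 0 <= g) by apply sqrt_pos.
  assert (hgm : 0 < g - s * t) by nra.
  assert (hgp : 0 < g + s * t) by nra.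
  (* rho u = (g - s t) / 2 and (1 - rho) a b / u = (g + s t) / 2: their product is
     rho (1 - rho) a b because g is the square root of the discriminant. *)
  set (u := (g - s * t) / (2 * rho)).
  assert (hu : 0 < u) by (apply Rdiv_lt_0_compat; lra).
  assert (hdual : a * b / u = (g + s * t) / (2 * (1 - rho))).
  { unfold u; field_simplify_eq; [nra | lra..]. }
  exists u; split; [exact hu | split].
  - replace ((1 - rho) * (a * b) / u) with ((1 - rho) * (a * b / u)) by (field; lra).
    rewrite hdual; unfold u, s; field; lra.
  - assert (harg : rho * (g + s * t) / ((1 - rho) * (g - s * t)) = a * b / (u * u)).
    { replace (a * b / (u * u)) with (a * b / u / u) by (field; lra).
      rewrite hdual; unfold u; field; lra. }
    rewrite harg, ln_div, 2!ln_mult by nra.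
    unfold eta_minorant; fold t; rewrite hdual.
    replace (s * t / 2 * (ln a + ln b - (ln u + ln u)))
      with (s * (t * (ln a - ln b)) / 2 + s * t * (ln b - ln u)) by field.
    rewrite hln; unfold u, s; field; lra.
Qed.

Lemma eta_stationary a b rho : 0 < b -> b < a -> 0 <= rho <= 1 ->
  exists u, 0 < u
  /\ (1 - 2 * rho) * tau_ab a b = (1 - rho) * (a * b) / u - rho * u
  /\ eta rho a b = eta_minorant a b u rho.
Proof.
  intros hb hab hr.
  assert (ht := tau_ab_pos a b hb hab); assert (hln := tau_ab_mul_ln a b hb hab).
  destruct (Req_dec rho 0) as [-> | h0]; [| destruct (Req_dec rho 1) as [-> | h1]].
  - exists (a * b / tau_ab a b); split; [apply Rdiv_lt_0_compat; nra | split].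
    + field; nra.
    + unfold eta; destruct (Rlt_dec 0 0); [lra |].
      rewrite eta_boundary by lra.
      unfold eta_minorant; rewrite ln_div, ln_mult by nra.
      replace (a * b / (a * b / tau_ab a b)) with (tau_ab a b) by (field; lra).
      nra.
  - exists (tau_ab a b); split; [lra | split]; [field; lra |].
    unfold eta; destruct (Rlt_dec 0 1); [| lra]; destruct (Rlt_dec 1 1); [lra |].
    rewrite eta_boundary by lra.
    unfold eta_minorant.
    replace (1 - 1) with 0 by ring.
    nra.
  - apply eta_interior_stationary; lra.
Qed.

Lemma eta_minorant_le a b rho w : 0 < b -> b < a -> 0 <= rho <= 1 -> 0 < w ->
  eta_minorant a b w rho <= eta rho a b.
Proof.
  intros hb hab hr hw.
  destruct (eta_stationary a b rho hb hab hr) as [u [hu [hcrit ->]]].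
  apply eta_minorant_le_stationary; lra.
Qed.

Lemma eta_convex a b r1 r2 l : 0 < b -> b < a ->
  0 <= r1 <= 1 -> 0 <= r2 <= 1 -> 0 <= l <= 1 ->
  eta (l * r1 + (1 - l) * r2) a b <= l * eta r1 a b + (1 - l) * eta r2 a b.
Proof.
  intros hb hab h1 h2 hl.
  destruct (eta_stationary a b (l * r1 + (1 - l) * r2) hb hab ltac:(nra))
    as [u [hu [_ ->]]].
  rewrite eta_minorant_affine.
  assert (eta_minorant a b u r1 <= eta r1 a b) by now apply eta_minorant_le.
  assert (eta_minorant a b u r2 <= eta r2 a b) by now apply eta_minorant_le.
  nra.
Qed.

Lemma eta_sym a b rho : 0 < b -> b < a -> 0 <= rho <= 1 ->
  eta rho a b = eta (1 - rho) a b.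
Proof.
  intros hb hab hr.
  destruct (eta_stationary a b rho hb hab hr) as [u1 [hu1 [_ e1]]].
  destruct (eta_stationary a b (1 - rho) hb hab ltac:(lra)) as [u2 [hu2 [_ e2]]].
  assert (0 < a * b / u1) by (apply Rdiv_lt_0_compat; nra).
  assert (0 < a * b / u2) by (apply Rdiv_lt_0_compat; nra).
  apply Rle_antisym.
  - rewrite e1; replace rho with (1 - (1 - rho)) at 1 by ring.
    rewrite eta_minorant_inv by lra.
    apply eta_minorant_le; lra.
  - rewrite e2, eta_minorant_inv by lra.
    apply eta_minorant_le; lra.
Qed.

Lemma eta_half a b : 0 < b -> b < a -> eta (1 / 2) a b = 1 / 2 * (sqrt a - sqrt b) ^ 2.
Proof.
  intros hb hab.
  unfold eta; destruct (Rlt_dec 0 (1 / 2)); [| lra]; destruct (Rlt_dec (1 / 2) 1); [| lra].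
  unfold gamma_ab.
  replace ((1 - 1 / 2 - 1 / 2) ^ 2 * tau_ab a b ^ 2 + 4 * (1 / 2) * (1 - 1 / 2) * a * b)
    with (a * b) by field.
  replace (1 - 1 / 2 - 1 / 2) with 0 by field.
  rewrite sqrt_mult by lra.
  assert (ha := sqrt_sqrt a ltac:(lra)); assert (hb' := sqrt_sqrt b ltac:(lra)).
  nra.
Qed.

Theorem lemma13 (a b : R) (hb : 0 < b) (hab : b < a) :
  (forall r1 r2 l : R, 0 <= r1 <= 1 -> 0 <= r2 <= 1 -> 0 <= l <= 1 ->
     eta (l * r1 + (1 - l) * r2) a b <= l * eta r1 a b + (1 - l) * eta r2 a b)
  /\ (forall rho : R, 0 <= rho <= 1 -> eta rho a b = eta (1 - rho) a b)
  /\ (forall rho : R, 0 <= rho <= 1 -> eta (1/2) a b <= eta rho a b)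
  /\ eta (1/2) a b = (1/2) * (sqrt a - sqrt b)^2.
Proof.
  split; [| split; [| split]].
  - intros r1 r2 l; now apply eta_convex.
  - intros rho; now apply eta_sym.
  - intros rho hr.
    assert (h := eta_convex a b rho (1 - rho) (1 / 2) hb hab hr ltac:(lra) ltac:(lra)).
    replace (1 / 2 * rho + (1 - 1 / 2) * (1 - rho)) with (1 / 2) in h by field.
    rewrite <- (eta_sym a b rho hb hab hr) in h; lra.
  - now apply eta_half.
Qed.
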